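(* Suppose Assumption 1 holds, and suppose expert knowledge gives $\rho(x)\ge\tilde\rho_L(x)$ for a pre-specified function $\tilde\rho_L$. Let $\bar\rho(x)=\max\{\tilde\rho_L(x),\rho_L(x)\}$. Then the sharp upper bound on $\mathrm{THR}(x)$ is $$\overline{\mathrm{THR}}_U(x)=\max\Big\{\mu_0(x)\{1-\mu_1(x)\}-\bar\rho(x)\sqrt{\mu_0(x)\{1-\mu_0(x)\}\mu_1(x)\{1-\mu_1(x)\}},\ 0\Big\}.$$ Moreover, $\overline{\mathrm{THR}}_U(x)$ is not greater than the Fréchet–Hoeffding upper bound $\min\{\mu_0(x),1-\mu_1(x)\}$ that holds under Assumption 1 alone.
   Context: Setting. Tuples $\{X,A,Y(1),Y(0)\}$ are drawn from a superpopulation, with binary treatment $A$ and binary potential outcomes $Y(a)\in\{0,1\}$. The observed outcome is $Y=AY(1)+(1-A)Y(0)$. Assumption 1: (i) $\{Y(0),Y(1)\}\perp\!\!\!\perp A\mid X$; (ii) $\epsilon<\mathbb{P}(A=1\mid X=x)<1-\epsilon$ for all $x$, for some constant $0<\epsilon<1/2$. Notation: - $\mu_a(x)=\mathbb{E}(Y\mid A=a,X=x)$. - $\mathrm{THR}(x)=\mathbb{P}(Y(0)=1,Y(1)=0\mid X=x)$. - $\rho(x)=\mathrm{Corr}(Y(0),Y(1)\mid X=x)$, defined where $0<\mu_a(x)<1$. - $\rho_L(x)=-\min\{\{1-\mu_0(x)\}\{1-\mu_1(x)\},\mu_0(x)\mu_1(x)\}\big/\sqrt{\mu_0(x)\{1-\mu_0(x)\}\mu_1(x)\{1-\mu_1(x)\}}$.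 ''Sharp upper bound'' means: $\mathrm{THR}(x)\le\overline{\mathrm{THR}}_U(x)$ for every joint distribution of potential outcomes compatible with the observed data, Assumption 1, and the constraint $\rho(x)\ge\tilde\rho_L(x)$; and this value is attained by some such distribution. *)

From HB Require Import structures.
From mathcomp Require Import all_boot all_order all_algebra.
From mathcomp Require Import reals.
Set Implicit Arguments. Unset Strict Implicit. Unset Printing Implicit Defensive.
Import Order.TTheory GRing.Theory Num.Theory.
Local Open Scope ring_scope.

(* Everything is conditional on a fixed covariate value X = x.
   - A "full law" q : bool -> bool -> bool -> R is the conditional joint pmf
     q y0 y1 a = P(Y(0)=y0, Y(1)=y1, A=a | X=x).
   - An "observed law" o : bool -> bool -> R is the conditional pmf of the
     observed data o a y = P(A=a, Y=y | X=x). *)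

Section Defs.
Variable R : realType.

Definition full_law (q : bool -> bool -> bool -> R) : Prop :=
  (forall y0 y1 a, 0 <= q y0 y1 a) /\
  \sum_(y0 : bool) \sum_(y1 : bool) \sum_(a : bool) q y0 y1 a = 1.

Definition obs_law (o : bool -> bool -> R) : Prop :=
  (forall a y, 0 <= o a y) /\ \sum_(a : bool) \sum_(y : bool) o a y = 1.

Definition mu (o : bool -> bool -> R) (a : bool) : R :=
  o a true / (o a false + o a true).

(* The full law induces the observed law through Y = A Y(1) + (1-A) Y(0). *)
Definition induces (q : bool -> bool -> bool -> R) (o : bool -> bool -> R) : Prop :=
  forall a y, o a y =
    \sum_(y0 : bool) \sum_(y1 : bool)
      (if (if a then y1 else y0) == y then q y0 y1 a else 0).

Definition pY (q : bool -> bool -> bool -> R) (y0 y1 : bool) : R :=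
  \sum_(a : bool) q y0 y1 a.

Definition pA (q : bool -> bool -> bool -> R) (a : bool) : R :=
  \sum_(y0 : bool) \sum_(y1 : bool) q y0 y1 a.

(* Assumption 1(i) at x: {Y(0),Y(1)} independent of A given X = x *)
Definition unconfounded (q : bool -> bool -> bool -> R) : Prop :=
  forall y0 y1 a, q y0 y1 a = pY q y0 y1 * pA q a.

Definition positivity (eps : R) (q : bool -> bool -> bool -> R) : Prop :=
  eps < pA q true < 1 - eps.

Definition THR (q : bool -> bool -> bool -> R) : R := pY q true false.

Definition corr (q : bool -> bool -> bool -> R) : R :=
  let m0 := pY q true false + pY q true true in
  let m1 := pY q false true + pY q true true in
  (pY q true true - m0 * m1) / Num.sqrt (m0 * (1 - m0) * (m1 * (1 - m1))).

Definition sdprod (m0 m1 : R) : R :=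
  Num.sqrt (m0 * (1 - m0) * m1 * (1 - m1)).

Definition rhoL (m0 m1 : R) : R :=
  - Num.min ((1 - m0) * (1 - m1)) (m0 * m1) / sdprod m0 m1.

(* compatibility with observed data, Assumption 1 and rho(x) >= rhot *)
Definition compatible (eps rhot : R) (o : bool -> bool -> R)
    (q : bool -> bool -> bool -> R) : Prop :=
  [/\ full_law q, induces q o, unconfounded q, positivity eps q & rhot <= corr q].

Definition THR_U (rhot m0 m1 : R) : R :=
  Num.max (m0 * (1 - m1) - Num.max rhot (rhoL m0 m1) * sdprod m0 m1) 0.

End Defs.

(* Given X = x, unconfoundedness and positivity make the observed data
   determine exactly the marginals m0 = mu_0(x) and m1 = mu_1(x) of
   (Y(0), Y(1)), and a joint law of two binary variables with these marginals
   is fixed by t = THR: it puts masses 1 - m1 - t, m1 - m0 + t, t, m0 - t on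
   (0,0), (0,1), (1,0), (1,1).  These are nonnegative iff
   max(0, m0 - m1) <= t <= min(m0, 1 - m1) (Frechet-Hoeffding), and since
   Cov(Y(0), Y(1)) = m0 (1 - m1) - t, the constraint rho >= rhot reads
   t <= m0 (1 - m1) - rhot sd.  So the compatible values of THR form an
   interval whose right end is min(m0 (1 - m1) - rhot sd, m0, 1 - m1); rhoL is
   the correlation at t = min(m0, 1 - m1), so this right end is THR_U as soon
   as the interval is nonempty, and it is attained by the corresponding joint
   law made independent of A. *)

From HB Require Import structures.
From mathcomp Require Import all_boot all_order all_algebra.
From mathcomp Require Import reals.
From mathcomp Require Import ring lra.
Import Order.TTheory GRing.Theory Num.Theory.
Local Open Scope ring_scope.

Section TreatmentHarmRate.
Context {R : realType}.
Implicit Types (q : bool -> bool -> bool -> R) (o : bool -> bool -> R).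
Implicit Types (p : bool -> bool -> R) (pa : bool -> R).
Implicit Types (eps rhot t : R).

Definition THR_cap rhot (m0 m1 : R) : R :=
  Num.min (m0 * (1 - m1) - rhot * sdprod m0 m1) (Num.min m0 (1 - m1)).

Lemma sdprod_gt0 (m0 m1 : R) : 0 < m0 < 1 -> 0 < m1 < 1 -> 0 < sdprod m0 m1.
Proof.
move=> /andP[? ?] /andP[? ?]; rewrite /sdprod sqrtr_gt0.
by rewrite !mulr_gt0 // subr_gt0.
Qed.

Lemma rhoL_mul_sdprod (m0 m1 : R) : 0 < m0 < 1 -> 0 < m1 < 1 ->
  rhoL m0 m1 * sdprod m0 m1 = - Num.min ((1 - m0) * (1 - m1)) (m0 * m1).
Proof. by move=> m0_01 m1_01; rewrite divfK // gt_eqF // sdprod_gt0. Qed.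

Lemma THR_UE rhot (m0 m1 : R) : 0 < m0 < 1 -> 0 < m1 < 1 ->
  THR_U rhot m0 m1 = Num.max (THR_cap rhot m0 m1) 0.
Proof.
move=> m0_01 m1_01; rewrite /THR_U /THR_cap; congr Num.max.
rewrite maxr_pMl ?ltW ?sdprod_gt0 // oppr_max addr_minr rhoL_mul_sdprod //.
rewrite opprK addr_minr.
have -> : m0 * (1 - m1) + (1 - m0) * (1 - m1) = 1 - m1 by ring.
have -> : m0 * (1 - m1) + m0 * m1 = m0 by ring.
by rewrite (minC (1 - m1)).
Qed.

Definition marg q (a : bool) : R :=
  \sum_(y0 : bool) \sum_(y1 : bool) (if (if a then y1 else y0) then pY q y0 y1 else 0).

Lemma margE q :
  marg q false = pY q true false + pY q true true /\
  marg q true = pY q false true + pY q true true.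
Proof. by rewrite /marg !big_bool /=; split; ring. Qed.

Lemma pY_ge0 {q} : full_law q -> forall y0 y1, 0 <= pY q y0 y1.
Proof. by case=> q_ge0 _ y0 y1; rewrite /pY big_bool addr_ge0. Qed.

Lemma pY_sum {q} : full_law q ->
  pY q false false + pY q false true + pY q true false + pY q true true = 1.
Proof. by case=> _ <-; rewrite /pY !big_bool /=; ring. Qed.

Lemma pA_sum {q} : full_law q -> \sum_(a : bool) pA q a = 1.
Proof. by case=> _ <-; rewrite /pA !big_bool /=; ring. Qed.

Lemma pA_gt0 {eps q} a : 0 <= eps -> full_law q -> positivity eps q -> 0 < pA q a.
Proof.
move=> eps_ge0 /pA_sum; rewrite big_bool /= /positivity => pA1 /andP[? ?].
by case: a; lra.
Qed.

Lemma THR_frechet {q} : full_law q ->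
  [/\ 0 <= THR q, marg q false - marg q true <= THR q,
      THR q <= marg q false & THR q <= 1 - marg q true].
Proof.
move=> lq; have [-> ->] := margE q; have := pY_sum lq; rewrite /THR => sum1.
have ge0 := pY_ge0 lq; have := ge0 false false; have := ge0 false true.
have := ge0 true false; have := ge0 true true.
by split; lra.
Qed.

Lemma corr_THR q :
  corr q = (marg q false * (1 - marg q true) - THR q) /
           sdprod (marg q false) (marg q true).
Proof.
rewrite /corr /sdprod /THR !mulrA; have [-> ->] := margE q.
by congr (_ / _); ring.
Qed.

Lemma corr_geE rhot q : 0 < sdprod (marg q false) (marg q true) ->
  (rhot <= corr q) =
  (THR q <= marg q false * (1 - marg q true)
            - rhot * sdprod (marg q false) (marg q true)).
Proof. by move=> s_gt0; rewrite corr_THR ler_pdivlMr // lerBrDl lerBrDr. Qed.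

Lemma unconfounded_induces q o : full_law q -> unconfounded q ->
  induces q o <->
  forall a, o a true = marg q a * pA q a /\ o a false = (1 - marg q a) * pA q a.
Proof.
move=> lq unc; have [m0E m1E] := margE q; rewrite /induces -(pY_sum lq).
split=> [ind a | obs a y].
  by rewrite !ind !big_bool /= !unc; case: a; rewrite /= ?m0E ?m1E; split; ring.
have [o1 o0] := obs a; case: y; rewrite ?o1 ?o0 !big_bool /= !unc;
  by case: a {o1 o0}; rewrite /= ?m0E ?m1E; ring.
Qed.

Lemma mu_marg {q o} a : full_law q -> unconfounded q -> induces q o ->
  0 < pA q a -> mu o a = marg q a.
Proof.
move=> lq unc /(unconfounded_induces q o lq unc)/(_ a)[o1 o0] pA_gt0.
by rewrite /mu o0 o1 -mulrDl subrK mul1r mulfK // gt_eqF.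
Qed.

Definition prod_law p pa : bool -> bool -> bool -> R := fun y0 y1 a => p y0 y1 * pa a.

Section ProdLaw.
Context {p : bool -> bool -> R} {pa : bool -> R}.
Hypotheses (p_sum : \sum_(y0 : bool) \sum_(y1 : bool) p y0 y1 = 1)
           (pa_sum : \sum_(a : bool) pa a = 1).

Lemma pY_prod_law y0 y1 : pY (prod_law p pa) y0 y1 = p y0 y1.
Proof. by rewrite /pY /prod_law -mulr_sumr pa_sum mulr1. Qed.

Lemma pA_prod_law a : pA (prod_law p pa) a = pa a.
Proof.
rewrite /pA /prod_law; under eq_bigr do rewrite -mulr_suml.
by rewrite -mulr_suml p_sum mul1r.
Qed.

Lemma unconfounded_prod_law : unconfounded (prod_law p pa).
Proof. by move=> y0 y1 a; rewrite pY_prod_law pA_prod_law. Qed.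

Lemma full_law_prod_law : (forall y0 y1, 0 <= p y0 y1) -> (forall a, 0 <= pa a) ->
  full_law (prod_law p pa).
Proof.
move=> p_ge0 pa_ge0; split=> [y0 y1 a|]; first exact: mulr_ge0.
rewrite -p_sum; apply: eq_bigr => y0 _; apply: eq_bigr => y1 _.
exact: pY_prod_law.
Qed.

End ProdLaw.

Definition coupling (m0 m1 t : R) (y0 y1 : bool) : R :=
  match y0, y1 with
  | true, false => t
  | true, true => m0 - t
  | false, true => m1 - m0 + t
  | false, false => 1 - m1 - t
  end.

Lemma coupling_ge0 (m0 m1 : R) t :
  0 <= t -> m0 - m1 <= t -> t <= m0 -> t <= 1 - m1 ->
  forall y0 y1, 0 <= coupling m0 m1 t y0 y1.
Proof. by move=> ? ? ? ? [] [] /=; lra. Qed.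

Lemma coupling_sum (m0 m1 : R) t :
  \sum_(y0 : bool) \sum_(y1 : bool) coupling m0 m1 t y0 y1 = 1.
Proof. by rewrite !big_bool /=; ring. Qed.

Section CouplingLaw.
Context {m0 m1 t : R} {pa : bool -> R}.
Hypothesis pa_sum : \sum_(a : bool) pa a = 1.

Lemma marg_coupling a : marg (prod_law (coupling m0 m1 t) pa) a = if a then m1 else m0.
Proof.
have [m0E m1E] := margE (prod_law (coupling m0 m1 t) pa).
by case: a; rewrite ?m0E ?m1E !pY_prod_law ?coupling_sum //=; ring.
Qed.

Lemma THR_coupling : THR (prod_law (coupling m0 m1 t) pa) = t.
Proof. by rewrite /THR pY_prod_law ?coupling_sum. Qed.

End CouplingLaw.

Section Compatible.
Context {eps rhot : R} {o : bool -> bool -> R}.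
Hypotheses (eps_ge0 : 0 <= eps)
           (mu0_01 : 0 < mu o false < 1) (mu1_01 : 0 < mu o true < 1).
Local Notation m0 := (mu o false).
Local Notation m1 := (mu o true).

Lemma compatible_marg {q} a : compatible eps rhot o q -> marg q a = mu o a.
Proof.
case=> lq ind unc pos _.
by rewrite (mu_marg a lq unc ind) // (pA_gt0 _ eps_ge0 lq pos).
Qed.

Lemma compatible_THR_bounds q : compatible eps rhot o q ->
  [/\ 0 <= THR q, m0 - m1 <= THR q & THR q <= THR_cap rhot m0 m1].
Proof.
move=> cq; have [lq _ _ _ corr_ge] := cq.
have [t_ge0 t_ge t_le0 t_le1] := THR_frechet lq.
rewrite !(compatible_marg _ cq) in t_ge t_le0 t_le1.
move: corr_ge; rewrite corr_geE !(compatible_marg _ cq) => [t_le_corr|].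
  by split=> //; rewrite /THR_cap !le_min t_le_corr t_le0 t_le1.
exact: sdprod_gt0.
Qed.

Lemma compatible_coupling q t : compatible eps rhot o q ->
  0 <= t -> m0 - m1 <= t -> t <= THR_cap rhot m0 m1 ->
  compatible eps rhot o (prod_law (coupling m0 m1 t) (pA q)).
Proof.
move=> cq t_ge0 t_ge; have [lq ind unc pos _] := cq.
rewrite /THR_cap !le_min => /and3P[t_le_corr t_le0 t_le1].
have pa_sum := pA_sum lq; have c_sum := coupling_sum m0 m1 t.
have lq' : full_law (prod_law (coupling m0 m1 t) (pA q)).
  apply: full_law_prod_law => //; first exact: coupling_ge0.
  by move=> a; apply/ltW/(pA_gt0 _ eps_ge0 lq pos).
have unc' := unconfounded_prod_law c_sum pa_sum.
split=> //.
- apply/(unconfounded_induces _ _ lq' unc') => a.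
  rewrite marg_coupling // pA_prod_law //.
  have [-> ->] := (unconfounded_induces q o lq unc).1 ind a.
  by rewrite (compatible_marg _ cq); case: a.
- by rewrite /positivity pA_prod_law.
- by rewrite corr_geE !marg_coupling ?THR_coupling //; exact: sdprod_gt0.
Qed.

End Compatible.

End TreatmentHarmRate.

Theorem proposition1 (R : realType) (eps rhot : R) (o : bool -> bool -> R) :
  0 < eps -> eps < 1 / 2 ->
  obs_law o ->
  0 < mu o false < 1 -> 0 < mu o true < 1 ->
  let U := THR_U rhot (mu o false) (mu o true) in
  [/\ (forall q, compatible eps rhot o q -> THR q <= U),
      ((exists q, compatible eps rhot o q) ->
         exists q, compatible eps rhot o q /\ THR q = U)
    & U <= Num.min (mu o false) (1 - mu o true)].
Proof.
move=> /ltW eps_ge0 _ _ mu0_01 mu1_01 U.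
have bounds := compatible_THR_bounds (rhot := rhot) eps_ge0 mu0_01 mu1_01.
set cap := THR_cap rhot (mu o false) (mu o true) in bounds *.
have -> : U = Num.max cap 0 by exact: THR_UE.
split.
- by move=> q /bounds[_ _ t_le]; rewrite le_max t_le.
- case=> q cq; have [t_ge0 t_ge t_le] := bounds q cq; have [lq _ _ _ _] := cq.
  exists (prod_law (coupling (mu o false) (mu o true) cap) (pA q)); split.
    by apply: compatible_coupling cq _ _ _ => //; apply: le_trans t_le.
  by rewrite (THR_coupling (pA_sum lq)) max_l //; apply: le_trans t_le.
- have [? ?] := andP mu0_01; have [? ?] := andP mu1_01.
  by rewrite ge_max /cap /THR_cap ge_min lexx orbT le_min; apply/andP; split; lra.
Qed.
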